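(* Let $\eta$ satisfy (A1) and (A2). Then $\lambda_{crit}(\eta)\ge0$, and: if $\lambda<\lambda_{crit}(\eta)$ then $\Phi_k(\lambda)(i,j)<\infty$ for all $i,j\in[d]$ and $k\in\mathbb Z$, $\eta$-a.s.; if $\lambda>\lambda_{crit}(\eta)$ then $\Phi_k(\lambda)(i,j)=\infty$ for all $i,j\in[d]$ and $k\in\mathbb Z$, $\eta$-a.s.
   Context: Setting. Fix $d\ge1$, $[d]=\{1,\dots,d\}$. $\Sigma$ is the set of triples $(q,r,p)$ of nonnegative $d\times d$ matrices with $(q+r+p)\mathbf 1=\mathbf 1$; $\Omega=\Sigma^{\mathbb Z}$, $\omega_n=(q_n,r_n,p_n)$, shift $(\theta\omega)_k=\omega_{k+1}$. For $\omega\in\Omega$, $P^{(x,i)}_\omega$ is the law of the Markov chain $(X_n,Y_n)$ on $\mathbb Z\times[d]$ started at $(x,i)$ which from $(k,i)$ jumps to $(k-1,j)$, $(k,j)$, $(k+1,j)$ with probabilities $q_k(i,j)$, $r_k(i,j)$, $p_k(i,j)$; $E^{(x,i)}_\omega$ its expectation; $T_x=\inf\{n\ge0:X_n=x\}$. For $\kappa>0$, $\Sigma_\kappa$ is the set of $(q,r,p)\in\Sigma$ with $\sum_jq(i,j)\ge\kappa$, $\sum_jp(i,j)\ge\kappa$ for all $i$, and $((I-r)^{-1}q)(i,j)\ge\kappa$, $((I-r)^{-1}p)(i,j)\ge\kappa$ for all $i,j$; $\Omega_\kappa=\Sigma_\kappa^{\mathbb Z}$. (A1): $\eta$ is stationary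 and ergodic under $\theta$. (A2): $\eta(\Omega_\kappa)=1$ for some $\kappa>0$. $\Phi_k(\lambda)$ is the $d\times d$ matrix with $\Phi_k(\lambda)(i,j)=E^{(k,i)}_\omega[e^{\lambda T_{k+1}}\mathbf 1\{T_{k+1}<\infty,Y_{T_{k+1}}=j\}]\in[0,\infty]$, and $\lambda_{crit}(\eta)=\sup\{\lambda:\eta(\max_i\sum_j\Phi_0(\lambda)(i,j)<\infty)=1\}$. *)

From Stdlib Require Import Reals ZArith Arith.
Open Scope R_scope.

(* [d] is represented by the indices 0..d-1 (nat). *)

Fixpoint rsum (n : nat) (f : nat -> R) : R :=
  match n with
  | O => 0
  | S m => rsum m f + f m
  end.

Definition Mat := nat -> nat -> R.

Definition mmul (d : nat) (A B : Mat) : Mat :=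
  fun i j => rsum d (fun l => A i l * B l j).

Definition idm : Mat := fun i j => if Nat.eq_dec i j then 1 else 0.

Definition msub (A B : Mat) : Mat := fun i j => A i j - B i j.

Record Trip := mkTrip { tq : Mat; tr : Mat; tp : Mat }.

Definition inSigma (d : nat) (s : Trip) : Prop :=
  (forall i j, (i < d)%nat -> (j < d)%nat ->
     0 <= tq s i j /\ 0 <= tr s i j /\ 0 <= tp s i j) /\
  (forall i, (i < d)%nat -> rsum d (fun j => tq s i j + tr s i j + tp s i j) = 1).

Definition is_inverse (d : nat) (A N : Mat) : Prop :=
  forall i j, (i < d)%nat -> (j < d)%nat ->
    mmul d N A i j = idm i j /\ mmul d A N i j = idm i j.

Definition inSigmaK (d : nat) (kappa : R) (s : Trip) : Prop :=
  inSigma d s /\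
  (forall i, (i < d)%nat ->
     rsum d (fun j => tq s i j) >= kappa /\ rsum d (fun j => tp s i j) >= kappa) /\
  exists N, is_inverse d (msub idm (tr s)) N /\
    forall i j, (i < d)%nat -> (j < d)%nat ->
      mmul d N (tq s) i j >= kappa /\ mmul d N (tp s) i j >= kappa.

Definition Env := Z -> Trip.

Definition shift (w : Env) : Env := fun k => w (k + 1)%Z.

(* The product sigma-algebra on environments: generated by the coordinate
   maps omega |-> q_n(i,j), r_n(i,j), p_n(i,j). *)
Inductive measurable (d : nat) : (Env -> Prop) -> Prop :=
  | meas_gen : forall (c : Trip -> Mat) (n : Z) (i j : nat) (a : R),
      (c = tq \/ c = tr \/ c = tp) -> (i < d)%nat -> (j < d)%nat ->
      measurable d (fun w => c (w n) i j <= a)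
  | meas_full : measurable d (fun _ => True)
  | meas_compl : forall A, measurable d A -> measurable d (fun w => ~ A w)
  | meas_union : forall A : nat -> Env -> Prop,
      (forall n, measurable d (A n)) -> measurable d (fun w => exists n, A n w)
  | meas_ext : forall A B, measurable d A -> (forall w, A w <-> B w) ->
      measurable d B.

Record ProbMeasure (d : nat) := {
  mu :> (Env -> Prop) -> R;
  mu_nonneg : forall A, measurable d A -> 0 <= mu A;
  mu_full : mu (fun _ => True) = 1;
  mu_sigma_add : forall A : nat -> Env -> Prop,
      (forall n, measurable d (A n)) ->
      (forall n m w, n <> m -> A n w -> A m w -> False) ->
      infinite_sum (fun n => mu (A n)) (mu (fun w => exists n, A n w))
}.

Definition almost_surely (d : nat) (eta : ProbMeasure d) (P : Env -> Prop) : Prop :=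
  exists A, measurable d A /\ mu d eta A = 1 /\ forall w, A w -> P w.

Definition stationary (d : nat) (eta : ProbMeasure d) : Prop :=
  forall A, measurable d A -> mu d eta (fun w => A (shift w)) = mu d eta A.

Definition ergodic (d : nat) (eta : ProbMeasure d) : Prop :=
  forall A, measurable d A -> (forall w, A (shift w) <-> A w) ->
    mu d eta A = 0 \/ mu d eta A = 1.

(* hit d w t n x i j = P^{(x,i)}_w (T_t = n, Y_n = j), computed by the
   first-step decomposition of the Markov chain. *)
Fixpoint hit (d : nat) (w : Env) (t : Z) (n : nat) (x : Z) (i j : nat) : R :=
  match n with
  | O => if Z.eq_dec x t then (if Nat.eq_dec i j then 1 else 0) else 0
  | S m =>
      if Z.eq_dec x t then 0 else
      rsum d (fun l =>
          tq (w x) i l * hit d w t m (x - 1)%Z l j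
        + tr (w x) i l * hit d w t m x l j
        + tp (w x) i l * hit d w t m (x + 1)%Z l j)
  end.

(* partial sums (over T_{k+1} < N) of
   Phi_k(lambda)(i,j) = E^{(k,i)}_w [ e^{lambda T_{k+1}} 1{T_{k+1} < oo, Y_{T_{k+1}} = j} ] *)
Definition PhiN (d : nat) (w : Env) (lam : R) (k : Z) (i j : nat) (N : nat) : R :=
  rsum N (fun n => exp (lam * INR n) * hit d w (k + 1)%Z n k i j).

Definition bounded_seq (u : nat -> R) : Prop := exists M, forall N, u N <= M.

(* Phi_k(lambda)(i,j) < oo  (nonnegative series with bounded partial sums);
   its negation is Phi_k(lambda)(i,j) = oo. *)
Definition Phi_finite (d : nat) (w : Env) (lam : R) (k : Z) (i j : nat) : Prop :=
  bounded_seq (PhiN d w lam k i j).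

(* max_i sum_j Phi_0(lambda)(i,j) < oo *)
Definition maxrow_Phi0_finite (d : nat) (w : Env) (lam : R) : Prop :=
  forall i, (i < d)%nat -> bounded_seq (fun N => rsum d (fun j => PhiN d w lam 0%Z i j N)).

Inductive ER := Fin (r : R) | PInf | MInf.

Definition ER_le (a b : ER) : Prop :=
  match a, b with
  | MInf, _ => True
  | _, PInf => True
  | Fin x, Fin y => x <= y
  | _, _ => False
  end.

Definition ER_lt (a b : ER) : Prop := ER_le a b /\ a <> b.

Definition is_ER_sup (S : R -> Prop) (s : ER) : Prop :=
  (forall x, S x -> ER_le (Fin x) s) /\
  (forall u, (forall x, S x -> ER_le (Fin x) u) -> ER_le s u).

Definition is_lambda_crit (d : nat) (eta : ProbMeasure d) (s : ER) : Prop :=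
  is_ER_sup (fun lam => almost_surely d eta (fun w => maxrow_Phi0_finite d w lam)) s.

From Pilot Require Import Defs.
From Stdlib Require Import Reals ZArith Arith Lra Lia Classical FunctionalExtensionality PropExtensionality.
Open Scope R_scope.

(** Proof outline.
    - [lambda_crit >= 0]: for [lambda = 0] the row sums of [Phi_0] are hitting probabilities,
      hence at most 1 ([hit_mass_le1]).
    - Below [lambda_crit] there is [lambda' > lambda] with [Phi_0(lambda')] a.s. finite; by
      stationarity the same holds for every [Phi_k(lambda') = Phi_0(lambda')] of the
      translated environment, and [Phi] is nondecreasing in [lambda].
    - Above [lambda_crit] the row sums of [Phi_0] are infinite with positive probability.
      Ellipticity gives, for all states [i, l], a positive-weight path of [r]-loops and one
      [q]-step (or [p]-step) at a site ([resolvent_term_pos]); composing such detours with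
      the strong Markov inequality [hit_compose] shows that one infinite entry of [Phi_k]
      makes every entry of [Phi_{k+1}] infinite. A forward-propagating event of positive
      probability holds at all sites almost surely ([ergodic_propagation], a zero-one law
      using stationarity and ergodicity), which gives the last claim. *)

(** * Finite sums *)

Lemma rsum_ext n f g : (forall l, (l < n)%nat -> f l = g l) -> rsum n f = rsum n g.
Proof.
  induction n as [|n IH]; simpl; intros H; auto.
  rewrite IH, (H n); [reflexivity|lia|intros; apply H; lia].
Qed.

Lemma rsum_le n f g : (forall l, (l < n)%nat -> f l <= g l) -> rsum n f <= rsum n g.
Proof.
  induction n as [|n IH]; simpl; intros H; [lra|].
  assert (rsum n f <= rsum n g) by (apply IH; intros; apply H; lia).
  assert (f n <= g n) by (apply H; lia). lra.
Qed.

Lemma rsum_zero n : rsum n (fun _ => 0) = 0.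
Proof. induction n; simpl; [|rewrite IHn]; lra. Qed.

Lemma rsum_nonneg n f : (forall l, (l < n)%nat -> 0 <= f l) -> 0 <= rsum n f.
Proof. intros H. rewrite <- (rsum_zero n). apply rsum_le; auto. Qed.

Lemma rsum_plus n f g : rsum n (fun l => f l + g l) = rsum n f + rsum n g.
Proof. induction n; simpl; [|rewrite IHn]; lra. Qed.

Lemma rsum_minus n f g : rsum n (fun l => f l - g l) = rsum n f - rsum n g.
Proof. induction n; simpl; [|rewrite IHn]; lra. Qed.

Lemma rsum_scal_l n c f : c * rsum n f = rsum n (fun l => c * f l).
Proof. induction n; simpl; [|rewrite <- IHn]; lra. Qed.

Lemma rsum_scal_r n c f : rsum n f * c = rsum n (fun l => f l * c).
Proof. induction n; simpl; [|rewrite <- IHn]; lra. Qed.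

Lemma rsum_const n c : rsum n (fun _ => c) = INR n * c.
Proof. induction n; simpl; [lra|]. rewrite IHn. destruct n; simpl; lra. Qed.

Lemma rsum_exch n m f :
  rsum n (fun a => rsum m (fun b => f a b)) = rsum m (fun b => rsum n (fun a => f a b)).
Proof.
  induction n; simpl.
  - now rewrite rsum_zero.
  - now rewrite IHn, <- rsum_plus.
Qed.

Lemma rsum_term n f k : (forall l, (l < n)%nat -> 0 <= f l) -> (k < n)%nat -> f k <= rsum n f.
Proof.
  induction n as [|n IH]; intros H Hk; [lia|]. simpl.
  assert (0 <= f n) by (apply H; lia).
  destruct (Nat.eq_dec k n) as [->|Hne].
  - assert (0 <= rsum n f) by (apply rsum_nonneg; intros; apply H; lia). lra.
  - assert (f k <= rsum n f) by (apply IH; [intros; apply H|]; lia). lra.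
Qed.

Lemma rsum_front n f : rsum (S n) f = f O + rsum n (fun a => f (S a)).
Proof. induction n; simpl in *; [|rewrite IHn]; lra. Qed.

Lemma rsum_add C N f : rsum (C + N) f = rsum C f + rsum N (fun a => f (C + a)%nat).
Proof.
  induction N; simpl.
  - rewrite Nat.add_0_r; lra.
  - rewrite Nat.add_succ_r. simpl. rewrite IHN; lra.
Qed.

Lemma rsum_delta n i f :
  (i < n)%nat -> rsum n (fun l => (if Nat.eq_dec i l then 1 else 0) * f l) = f i.
Proof.
  induction n as [|n IH]; intros Hi; [lia|]. simpl. destruct (Nat.eq_dec i n) as [->|Hne].
  - rewrite (rsum_ext _ _ (fun _ => 0)), rsum_zero; [lra|].
    intros l Hl. destruct (Nat.eq_dec n l); [lia|lra].
  - rewrite IH by lia. lra.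
Qed.

Lemma rsum_abs n f : Rabs (rsum n f) <= rsum n (fun l => Rabs (f l)).
Proof.
  induction n; simpl.
  - rewrite Rabs_R0; lra.
  - eapply Rle_trans; [apply Rabs_triang|]. lra.
Qed.

Lemma rsum_bounded_seq n (f : nat -> nat -> R) :
  (forall j, (j < n)%nat -> bounded_seq (f j)) -> bounded_seq (fun N => rsum n (fun j => f j N)).
Proof.
  induction n as [|n IH]; intros H.
  - exists 0; intros; simpl; lra.
  - destruct IH as [M1 HM1]; [intros; apply H; lia|].
    destruct (H n) as [M2 HM2]; [lia|].
    exists (M1 + M2); intros N; simpl. specialize (HM1 N); specialize (HM2 N); lra.
Qed.

(** * Matrices of size [d] *)

Definition mat_nonneg (d : nat) (A : Mat) : Prop :=
  forall a b, (a < d)%nat -> (b < d)%nat -> 0 <= A a b.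

Definition rows_le1 (d : nat) (A : Mat) : Prop :=
  forall a, (a < d)%nat -> rsum d (fun b => A a b) <= 1.

Fixpoint mpow (d : nat) (r : Mat) (n : nat) : Mat :=
  match n with O => idm | S n => mmul d (mpow d r n) r end.

Lemma mmul_ext_l d A A' B i j :
  (forall l, (l < d)%nat -> A i l = A' i l) -> mmul d A B i j = mmul d A' B i j.
Proof. intros H; unfold mmul; apply rsum_ext; intros; rewrite H; auto. Qed.

Lemma mmul_ext_r d A B B' i j :
  (forall l, (l < d)%nat -> B l j = B' l j) -> mmul d A B i j = mmul d A B' i j.
Proof. intros H; unfold mmul; apply rsum_ext; intros; rewrite H; auto. Qed.

Lemma mmul_assoc d A B C i j : mmul d (mmul d A B) C i j = mmul d A (mmul d B C) i j.
Proof.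
  unfold mmul.
  transitivity (rsum d (fun l => rsum d (fun m => A i m * B m l * C l j))).
  - apply rsum_ext; intros. now rewrite rsum_scal_r.
  - rewrite rsum_exch. apply rsum_ext; intros. rewrite rsum_scal_l.
    apply rsum_ext; intros; ring.
Qed.

Lemma mmul_plus_l d A B C i j :
  mmul d (fun a b => A a b + B a b) C i j = mmul d A C i j + mmul d B C i j.
Proof. unfold mmul. rewrite <- rsum_plus. apply rsum_ext; intros; ring. Qed.

Lemma mmul_idm_l d A i j : (i < d)%nat -> mmul d idm A i j = A i j.
Proof. intros. apply (rsum_delta d i (fun l => A l j)); auto. Qed.

Lemma mmul_idm_r d A i j : (j < d)%nat -> mmul d A idm i j = A i j.
Proof.
  intros. unfold mmul, idm.
  rewrite (rsum_ext _ _ (fun l => (if Nat.eq_dec j l then 1 else 0) * A i l)).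
  - apply (rsum_delta d j (fun l => A i l)); auto.
  - intros l _. destruct (Nat.eq_dec l j), (Nat.eq_dec j l); subst; try lia; ring.
Qed.

Lemma mmul_nonneg d A B i j : (i < d)%nat -> (j < d)%nat ->
  mat_nonneg d A -> mat_nonneg d B -> 0 <= mmul d A B i j.
Proof. intros Hi Hj HA HB. apply rsum_nonneg; intros. apply Rmult_le_pos; auto. Qed.

Lemma mmul_le_r d A B B' i j : (i < d)%nat -> mat_nonneg d A ->
  (forall l, (l < d)%nat -> B l j <= B' l j) -> mmul d A B i j <= mmul d A B' i j.
Proof. intros Hi HA H. apply rsum_le; intros. apply Rmult_le_compat_l; auto. Qed.

Lemma mmul_ge_term d A B i l j : (i < d)%nat -> (l < d)%nat -> (j < d)%nat ->
  mat_nonneg d A -> mat_nonneg d B -> A i l * B l j <= mmul d A B i j.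
Proof.
  intros Hi Hl Hj HA HB.
  apply (rsum_term d (fun m => A i m * B m j)); auto.
  intros; apply Rmult_le_pos; auto.
Qed.

Lemma mmul_row_sum d A B i :
  rsum d (fun j => mmul d A B i j) = rsum d (fun l => A i l * rsum d (fun j => B l j)).
Proof.
  unfold mmul. rewrite rsum_exch. apply rsum_ext; intros. symmetry; apply rsum_scal_l.
Qed.

Lemma idm_nonneg d : mat_nonneg d idm.
Proof. intros a b _ _. unfold idm. destruct Nat.eq_dec; lra. Qed.

Lemma idm_row d a : (a < d)%nat -> rsum d (fun b => idm a b) = 1.
Proof.
  intros. rewrite (rsum_ext _ _ (fun b => (if Nat.eq_dec a b then 1 else 0) * 1)).
  - apply rsum_delta; auto.
  - intros; unfold idm; ring.
Qed.

Lemma mpow_nonneg d r : mat_nonneg d r -> forall n, mat_nonneg d (mpow d r n).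
Proof.
  intros Hr n. induction n; simpl; [apply idm_nonneg|].
  intros a b Ha Hb. apply mmul_nonneg; auto.
Qed.

Lemma mpow_rows_le1 d r : mat_nonneg d r -> rows_le1 d r -> forall n, rows_le1 d (mpow d r n).
Proof.
  intros Hr Hrow n. induction n as [|n IH]; intros a Ha; simpl.
  - rewrite idm_row by auto; lra.
  - unfold mmul. rewrite rsum_exch.
    apply Rle_trans with (rsum d (fun l => mpow d r n a l)); auto.
    apply rsum_le; intros l Hl. rewrite <- rsum_scal_l.
    assert (0 <= mpow d r n a l) by (apply mpow_nonneg; auto).
    specialize (Hrow l Hl).
    change (rsum d (r l)) with (rsum d (fun b => r l b)). nra.
Qed.

Lemma mpow_le1 d r n a b : mat_nonneg d r -> rows_le1 d r -> (a < d)%nat -> (b < d)%nat ->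
  mpow d r n a b <= 1.
Proof.
  intros Hr Hrow Ha Hb. eapply Rle_trans; [|apply (mpow_rows_le1 d r Hr Hrow n a Ha)].
  apply (rsum_term d (fun b => mpow d r n a b)); auto.
  intros; apply mpow_nonneg; auto.
Qed.

Lemma nat_unbounded x : exists M : nat, x < INR M.
Proof.
  destruct (archimed x) as [H1 _]. destruct (Z_lt_le_dec (up x) 0) as [Hneg|Hpos].
  - exists O. apply IZR_lt in Hneg. simpl. lra.
  - exists (Z.to_nat (up x)). rewrite INR_IZR_INZ, Z2Nat.id by lia. auto.
Qed.

Lemma mpow_telescope d r u y :
  (forall a b, (a < d)%nat -> (b < d)%nat -> u a b = y a b + mmul d r u a b) ->
  forall K a b, (a < d)%nat -> (b < d)%nat ->
  u a b = rsum K (fun n => mmul d (mpow d r n) y a b) + mmul d (mpow d r K) u a b.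
Proof.
  intros H K. induction K as [|K IH]; intros a b Ha Hb.
  - simpl. rewrite mmul_idm_l by auto. lra.
  - rewrite IH by auto. simpl rsum.
    rewrite (mmul_ext_r d _ _ (fun a' b' => y a' b' + mmul d r u a' b')) by (intros; apply H; auto).
    assert (E : mmul d (mpow d r K) (fun a' b' => y a' b' + mmul d r u a' b') a b
                = mmul d (mpow d r K) y a b + mmul d (mpow d r K) (mmul d r u) a b).
    { unfold mmul. rewrite <- rsum_plus. apply rsum_ext; intros; ring. }
    rewrite E. simpl mpow. rewrite mmul_assoc. lra.
Qed.

Lemma inverse_fixed_point d r N y : is_inverse d (msub idm r) N ->
  forall a b, (a < d)%nat -> (b < d)%nat ->
  mmul d N y a b = y a b + mmul d r (mmul d N y) a b.
Proof.
  intros Hinv a b Ha Hb.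
  assert (E1 : mmul d (msub idm r) (mmul d N y) a b = y a b).
  { rewrite <- mmul_assoc, (mmul_ext_l d _ idm), mmul_idm_l; auto.
    intros l Hl. apply (Hinv a l Ha Hl). }
  assert (E2 : mmul d (msub idm r) (mmul d N y) a b
               = mmul d idm (mmul d N y) a b - mmul d r (mmul d N y) a b).
  { unfold mmul, msub. rewrite <- rsum_minus. apply rsum_ext; intros. ring. }
  rewrite mmul_idm_l in E2 by auto. lra.
Qed.

Lemma mmul_unit_entries_bound d P v i j :
  (forall l, (l < d)%nat -> 0 <= P i l <= 1) ->
  Rabs (mmul d P v i j) <= rsum d (fun l => Rabs (v l j)).
Proof.
  intros HP. unfold mmul. eapply Rle_trans; [apply rsum_abs|].
  apply rsum_le; intros l Hl. rewrite Rabs_mult, (Rabs_pos_eq (P i l)) by apply HP, Hl.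
  destruct (HP l Hl). assert (0 <= Rabs (v l j)) by apply Rabs_pos. nra.
Qed.

(** Otherwise [u = (I-r)^{-1} y] would satisfy [(r^K u)(i,j) = u(i,j)] for all [K], and
    unrolling [v = (I-r)^{-1} u] would make [v(i,j) - K u(i,j)] bounded, which is absurd. *)
Lemma resolvent_term_pos d r N y i j :
  is_inverse d (msub idm r) N -> mat_nonneg d r -> rows_le1 d r -> mat_nonneg d y ->
  (i < d)%nat -> (j < d)%nat -> 0 < mmul d N y i j ->
  exists n, 0 < mmul d (mpow d r n) y i j.
Proof.
  intros Hinv Hr Hrow Hy Hi Hj Hu. apply NNPP; intros Hnone.
  assert (Hzero : forall n, mmul d (mpow d r n) y i j = 0).
  { intros n. assert (0 <= mmul d (mpow d r n) y i j)
      by (apply mmul_nonneg; auto; apply mpow_nonneg; auto).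
    destruct (Req_dec (mmul d (mpow d r n) y i j) 0); auto.
    exfalso. apply Hnone. exists n. lra. }
  set (u := mmul d N y) in *.
  assert (Hfix : forall K, mmul d (mpow d r K) u i j = u i j).
  { intros K. rewrite (mpow_telescope d r u y (inverse_fixed_point d r N y Hinv) K i j Hi Hj).
    rewrite (rsum_ext _ _ (fun _ => 0)) by (intros; apply Hzero). rewrite rsum_zero. lra. }
  set (v := mmul d N u).
  set (B := Rabs (v i j) + rsum d (fun l => Rabs (v l j))).
  destruct (nat_unbounded (B / u i j)) as [K HK].
  assert (HvK := mpow_telescope d r v u (inverse_fixed_point d r N u Hinv) K i j Hi Hj).
  rewrite (rsum_ext _ _ (fun _ => u i j)), rsum_const in HvK by (intros; apply Hfix).
  assert (Hb : Rabs (mmul d (mpow d r K) v i j) <= rsum d (fun l => Rabs (v l j))).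
  { apply mmul_unit_entries_bound. intros l Hl. split.
    - apply mpow_nonneg; auto.
    - apply mpow_le1; auto. }
  assert (INR K * u i j <= B).
  { unfold B. assert (H1 := Rle_abs (v i j)).
    assert (H2 := Rle_abs (- mmul d (mpow d r K) v i j)). rewrite Rabs_Ropp in H2. lra. }
  assert (B / u i j * u i j = B) by (field; lra).
  assert (B / u i j * u i j < INR K * u i j) by (apply Rmult_lt_compat_r; lra). lra.
Qed.

Lemma sigmaK_excursions_pos d kappa s i l :
  kappa > 0 -> inSigmaK d kappa s -> (i < d)%nat -> (l < d)%nat ->
  (exists n, 0 < mmul d (mpow d (tr s) n) (tq s) i l) /\
  (exists n, 0 < mmul d (mpow d (tr s) n) (tp s) i l).
Proof.
  intros Hk [[Hnn Hrow] [_ [N [Hinv HN]]]] Hi Hl. destruct (HN i l Hi Hl) as [Nq Np].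
  assert (Hr : mat_nonneg d (tr s)) by (intros a b Ha Hb; apply Hnn; auto).
  assert (Hr1 : rows_le1 d (tr s)).
  { intros a Ha. rewrite <- (Hrow a Ha). apply rsum_le; intros b Hb.
    destruct (Hnn a b Ha Hb) as [? [? ?]]. lra. }
  split; eapply resolvent_term_pos; eauto; try lra; intros a b Ha Hb; apply Hnn; auto.
Qed.

(** * Hitting probabilities in a fixed environment *)

Definition nonneg_env (d : nat) (w : Env) : Prop :=
  forall x, mat_nonneg d (tq (w x)) /\ mat_nonneg d (tr (w x)) /\ mat_nonneg d (tp (w x)).

Section Hitting.
Variable d : nat.
Variable w : Env.

Lemma hit_S t n x i j : x <> t ->
  hit d w t (S n) x i j =
  mmul d (tq (w x)) (hit d w t n (x - 1)) i j + mmul d (tr (w x)) (hit d w t n x) i j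
  + mmul d (tp (w x)) (hit d w t n (x + 1)) i j.
Proof.
  intros H; simpl. destruct Z.eq_dec; [congruence|].
  unfold mmul. rewrite <- !rsum_plus. reflexivity.
Qed.

Lemma hit_S_target t n i j : hit d w t (S n) t i j = 0.
Proof. simpl. destruct Z.eq_dec; congruence. Qed.

Lemma hit_0_target t i j : hit d w t 0 t i j = idm i j.
Proof. simpl. destruct Z.eq_dec; [reflexivity|congruence]. Qed.

Lemma hit_0_off t x i j : x <> t -> hit d w t 0 x i j = 0.
Proof. intros; simpl. destruct Z.eq_dec; congruence. Qed.

Hypothesis Hw : nonneg_env d w.

Lemma hit_nonneg t n : forall x, mat_nonneg d (hit d w t n x).
Proof.
  induction n as [|n IH]; intros x i j Hi Hj.
  - simpl. destruct Z.eq_dec; [destruct Nat.eq_dec|]; lra.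
  - destruct (Z.eq_dec x t) as [->|Hx]; [rewrite hit_S_target; lra|].
    rewrite hit_S by auto. destruct (Hw x) as [Hq [Hr Hp]].
    assert (0 <= mmul d (tq (w x)) (hit d w t n (x - 1)) i j) by (apply mmul_nonneg; auto).
    assert (0 <= mmul d (tr (w x)) (hit d w t n x) i j) by (apply mmul_nonneg; auto).
    assert (0 <= mmul d (tp (w x)) (hit d w t n (x + 1)) i j) by (apply mmul_nonneg; auto).
    lra.
Qed.

Lemma hit_S_ge t c x m j : x <> t -> (m < d)%nat -> (j < d)%nat ->
  mmul d (tq (w x)) (hit d w t c (x - 1)) m j <= hit d w t (S c) x m j /\
  mmul d (tr (w x)) (hit d w t c x) m j <= hit d w t (S c) x m j /\
  mmul d (tp (w x)) (hit d w t c (x + 1)) m j <= hit d w t (S c) x m j.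
Proof.
  intros Hx Hm Hj. rewrite hit_S by auto. destruct (Hw x) as [Hq [Hr Hp]].
  assert (0 <= mmul d (tq (w x)) (hit d w t c (x - 1)) m j) by (apply mmul_nonneg, hit_nonneg; auto).
  assert (0 <= mmul d (tr (w x)) (hit d w t c x) m j) by (apply mmul_nonneg, hit_nonneg; auto).
  assert (0 <= mmul d (tp (w x)) (hit d w t c (x + 1)) m j) by (apply mmul_nonneg, hit_nonneg; auto).
  lra.
Qed.

Lemma hit_loops t x j : x <> t -> (j < d)%nat -> forall n c i, (i < d)%nat ->
  mmul d (mpow d (tr (w x)) n) (hit d w t c x) i j <= hit d w t (n + c) x i j.
Proof.
  intros Hx Hj n. destruct (Hw x) as [_ [Hr _]].
  induction n as [|n IH]; intros c i Hi.
  - simpl. rewrite mmul_idm_l by auto. lra.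
  - replace (S n + c)%nat with (n + S c)%nat by lia.
    eapply Rle_trans; [|apply IH; auto]. simpl mpow. rewrite mmul_assoc.
    apply mmul_le_r; auto using mpow_nonneg.
    intros l Hl. apply hit_S_ge; auto.
Qed.

Lemma hit_left_excursion t x j n b i : x <> t -> (j < d)%nat -> (i < d)%nat ->
  mmul d (mmul d (mpow d (tr (w x)) n) (tq (w x))) (hit d w t b (x - 1)) i j
  <= hit d w t (n + S b) x i j.
Proof.
  intros Hx Hj Hi. destruct (Hw x) as [_ [Hr _]].
  eapply Rle_trans; [|apply hit_loops; auto]. rewrite mmul_assoc.
  apply mmul_le_r; auto using mpow_nonneg.
  intros l Hl. apply hit_S_ge; auto.
Qed.

Lemma hit_right_excursion t x j n i : (x + 1)%Z = t -> (j < d)%nat -> (i < d)%nat ->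
  mmul d (mpow d (tr (w x)) n) (tp (w x)) i j <= hit d w t (n + 1) x i j.
Proof.
  intros Hx Hj Hi. destruct (Hw x) as [_ [Hr _]].
  eapply Rle_trans; [|apply hit_loops; auto; lia].
  apply mmul_le_r; auto using mpow_nonneg.
  intros l Hl. destruct (hit_S_ge t 0 x l j) as [_ [_ Hstep]]; auto; [lia|].
  eapply Rle_trans; [|exact Hstep].
  rewrite (mmul_ext_r d _ _ idm), mmul_idm_r by (auto; intros; rewrite Hx; apply hit_0_target).
  lra.
Qed.

(** Strong Markov inequality at the intermediate level [s]: from [x <= s], hitting [s] at
    time [a] and then [t > s] after [b] more steps is one way of hitting [t] at time [a+b]. *)
Lemma hit_compose s t j : (s < t)%Z -> (j < d)%nat -> forall a b x i, (x <= s)%Z -> (i < d)%nat ->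
  mmul d (hit d w s a x) (hit d w t b s) i j <= hit d w t (a + b) x i j.
Proof.
  intros Hst Hj a. induction a as [|a IH]; intros b x i Hx Hi.
  - destruct (Z.eq_dec x s) as [->|Hne].
    + rewrite (mmul_ext_l d _ idm), mmul_idm_l by (intros; apply hit_0_target || auto; auto).
      simpl; lra.
    + rewrite (mmul_ext_l d _ (fun _ _ => 0)) by (intros; apply hit_0_off; auto).
      unfold mmul. rewrite (rsum_ext _ _ (fun _ => 0)), rsum_zero by (intros; ring).
      apply hit_nonneg; auto.
  - destruct (Z.eq_dec x s) as [->|Hne].
    + rewrite (mmul_ext_l d _ (fun _ _ => 0)) by (intros; apply hit_S_target).
      unfold mmul. rewrite (rsum_ext _ _ (fun _ => 0)), rsum_zero by (intros; ring).
      apply hit_nonneg; auto.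
    + destruct (Hw x) as [Hq [Hr Hp]].
      rewrite (mmul_ext_l d _ (fun i' l => mmul d (tq (w x)) (hit d w s a (x - 1)) i' l
          + mmul d (tr (w x)) (hit d w s a x) i' l + mmul d (tp (w x)) (hit d w s a (x + 1)) i' l))
        by (intros; apply hit_S; auto).
      rewrite !mmul_plus_l, !mmul_assoc. simpl (S a + b)%nat. rewrite hit_S by lia.
      repeat apply Rplus_le_compat; apply mmul_le_r; auto; intros l Hl; apply IH; auto; lia.
Qed.

(** The detour used to compare [Phi_x] and [Phi_{x+1}]: from [(x+1, i)] loop [n1] times and
    step down to [(x, l)]; go from [(x, l)] back up to [(x+1, m)] in [a] steps; then loop [n2]
    times and step up to [(x+2, j)]. *)
Lemma hit_detour (x : Z) (n1 n2 a : nat) i l m j :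
  (i < d)%nat -> (l < d)%nat -> (m < d)%nat -> (j < d)%nat ->
  mmul d (mpow d (tr (w (x + 1)%Z)) n1) (tq (w (x + 1)%Z)) i l
  * mmul d (mpow d (tr (w (x + 1)%Z)) n2) (tp (w (x + 1)%Z)) m j
  * hit d w (x + 1) a x l m
  <= hit d w (x + 1 + 1) (n1 + S (a + (n2 + 1))) (x + 1) i j.
Proof.
  intros Hi Hl Hm Hj. destruct (Hw (x + 1)%Z) as [Hq [Hr Hp]].
  set (c1 := mmul d (mpow d (tr (w (x + 1)%Z)) n1) (tq (w (x + 1)%Z)) i l).
  set (c2 := mmul d (mpow d (tr (w (x + 1)%Z)) n2) (tp (w (x + 1)%Z)) m j).
  assert (Hc1 : 0 <= c1) by (apply mmul_nonneg; auto using mpow_nonneg).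
  assert (Hup : hit d w (x + 1) a x l m * c2
                <= hit d w (x + 1 + 1) (a + (n2 + 1)) x l j).
  { eapply Rle_trans; [|apply (hit_compose (x + 1)); auto; lia].
    eapply Rle_trans; [|apply mmul_ge_term with (l := m); auto using hit_nonneg].
    apply Rmult_le_compat_l; [apply hit_nonneg; auto|].
    apply hit_right_excursion; auto. }
  assert (Hdown : c1 * hit d w (x + 1 + 1) (a + (n2 + 1)) x l j
                  <= hit d w (x + 1 + 1) (n1 + S (a + (n2 + 1))) (x + 1) i j).
  { eapply Rle_trans; [|apply hit_left_excursion; auto; lia].
    replace (x + 1 - 1)%Z with x by ring.
    apply mmul_ge_term; auto using hit_nonneg.
    intros ? ? ? ?; apply mmul_nonneg; auto using mpow_nonneg. }
  assert (0 <= hit d w (x + 1) a x l m) by (apply hit_nonneg; auto).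
  assert (c1 * (hit d w (x + 1) a x l m * c2) <= c1 * hit d w (x + 1 + 1) (a + (n2 + 1)) x l j)
    by (apply Rmult_le_compat_l; auto).
  nra.
Qed.

(** Total mass: the events [{T_t = n}] are disjoint, so their probabilities sum to at most 1. *)
Lemma hit_mass_le1 :
  (forall x i, (i < d)%nat -> rsum d (fun l => tq (w x) i l + tr (w x) i l + tp (w x) i l) = 1) ->
  forall N t x i, (i < d)%nat -> rsum N (fun n => rsum d (fun j => hit d w t n x i j)) <= 1.
Proof.
  intros Hrow N. induction N as [|N IH]; intros t x i Hi; [simpl; lra|].
  rewrite rsum_front. destruct (Z.eq_dec x t) as [->|Hx].
  - rewrite (rsum_ext d _ (fun j => idm i j)) by (intros; apply hit_0_target).
    rewrite idm_row by auto.
    rewrite (rsum_ext N _ (fun _ => 0)), rsum_zero; [lra|].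
    intros a _. rewrite (rsum_ext _ _ (fun _ => 0)), rsum_zero; auto.
    intros; apply hit_S_target.
  - rewrite (rsum_ext d _ (fun _ => 0)), rsum_zero by (intros; apply hit_0_off; auto).
    set (G := fun y l => rsum N (fun n => rsum d (fun j => hit d w t n y l j))).
    assert (Hsplit : rsum N (fun a => rsum d (fun j => hit d w t (S a) x i j)) =
      rsum d (fun l => tq (w x) i l * G (x - 1)%Z l + tr (w x) i l * G x l
                       + tp (w x) i l * G (x + 1)%Z l)).
    { transitivity (rsum N (fun a => rsum d (fun l =>
          tq (w x) i l * rsum d (fun j => hit d w t a (x - 1) l j)
        + tr (w x) i l * rsum d (fun j => hit d w t a x l j)
        + tp (w x) i l * rsum d (fun j => hit d w t a (x + 1) l j)))).
      - apply rsum_ext; intros a _.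
        rewrite (rsum_ext d _ (fun j => mmul d (tq (w x)) (hit d w t a (x - 1)) i j
            + mmul d (tr (w x)) (hit d w t a x) i j + mmul d (tp (w x)) (hit d w t a (x + 1)) i j))
          by (intros; apply hit_S; auto).
        rewrite !rsum_plus, !mmul_row_sum, <- !rsum_plus. reflexivity.
      - rewrite rsum_exch. apply rsum_ext; intros l _. unfold G.
        rewrite !rsum_scal_l, <- !rsum_plus. reflexivity. }
    rewrite Hsplit, Rplus_0_l, <- (Hrow x i Hi). apply rsum_le; intros l Hl.
    destruct (Hw x) as [Hq [Hr Hp]].
    assert (Hq0 := Hq i l Hi Hl). assert (Hr0 := Hr i l Hi Hl). assert (Hp0 := Hp i l Hi Hl).
    assert (G (x - 1)%Z l <= 1) by (apply IH; auto).
    assert (G x l <= 1) by (apply IH; auto).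
    assert (G (x + 1)%Z l <= 1) by (apply IH; auto).
    nra.
Qed.

End Hitting.

Definition shiftn (k : Z) (w : Env) : Env := fun m => w (m + k)%Z.

Lemma shiftn_shift k w : shiftn k (Defs.shift w) = shiftn (k + 1) w.
Proof. apply functional_extensionality; intros m. unfold shiftn, Defs.shift. f_equal. ring. Qed.

Lemma shift_shiftn k w : Defs.shift (shiftn k w) = shiftn (k + 1) w.
Proof. apply functional_extensionality; intros m. unfold shiftn, Defs.shift. f_equal. ring. Qed.

Lemma shiftn0 w : shiftn 0 w = w.
Proof. apply functional_extensionality; intros m. unfold shiftn. f_equal. ring. Qed.

Lemma hit_shift d w t n : forall s x i j,
  hit d w t n x i j = hit d (shiftn s w) (t - s) n (x - s) i j.
Proof.
  induction n as [|n IH]; intros s x i j; simpl.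
  - destruct (Z.eq_dec x t), (Z.eq_dec (x - s) (t - s)); auto; lia.
  - destruct (Z.eq_dec x t), (Z.eq_dec (x - s) (t - s)); auto; try lia.
    apply rsum_ext; intros l Hl.
    rewrite (IH s (x - 1)%Z), (IH s x), (IH s (x + 1)%Z).
    replace (x - 1 - s)%Z with (x - s - 1)%Z by ring.
    replace (x + 1 - s)%Z with (x - s + 1)%Z by ring.
    unfold shiftn. replace (x - s + s)%Z with x by ring. reflexivity.
Qed.

(** * The generating matrices [Phi_k(lambda)] *)

Definition good_env (d : nat) (kappa : R) (w : Env) : Prop := forall n : Z, inSigmaK d kappa (w n).

Lemma good_env_nonneg d kappa w : good_env d kappa w -> nonneg_env d w.
Proof.
  intros H x. destruct (H x) as [[Hnn _] _].
  split; [|split]; intros a b Ha Hb; apply Hnn; auto.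
Qed.

Lemma good_env_shiftn d kappa k w : good_env d kappa w -> good_env d kappa (shiftn k w).
Proof. intros H n. apply H. Qed.

Lemma PhiN_nonneg d w lam k i j N : nonneg_env d w -> (i < d)%nat -> (j < d)%nat ->
  0 <= PhiN d w lam k i j N.
Proof.
  intros Hw Hi Hj. apply rsum_nonneg; intros.
  apply Rmult_le_pos; [left; apply exp_pos|apply hit_nonneg; auto].
Qed.

Lemma Phi_finite_mono d w lam lam' k i j : nonneg_env d w -> lam <= lam' ->
  (i < d)%nat -> (j < d)%nat -> Phi_finite d w lam' k i j -> Phi_finite d w lam k i j.
Proof.
  intros Hw Hl Hi Hj [M HM]. exists M. intros N. eapply Rle_trans; [|apply (HM N)].
  apply rsum_le; intros n _. apply Rmult_le_compat_r; [apply hit_nonneg; auto|].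
  assert (lam * INR n <= lam' * INR n) by (apply Rmult_le_compat_r; auto; apply pos_INR).
  destruct (Req_dec (lam * INR n) (lam' * INR n)) as [E|E]; [rewrite E; lra|].
  left; apply exp_increasing; lra.
Qed.

Lemma maxrow_entry d w lam : nonneg_env d w ->
  maxrow_Phi0_finite d w lam <->
  (forall i j, (i < d)%nat -> (j < d)%nat -> Phi_finite d w lam 0 i j).
Proof.
  intros Hw. split.
  - intros H i j Hi Hj. destruct (H i Hi) as [M HM]. exists M. intros N.
    eapply Rle_trans; [|apply (HM N)].
    apply (rsum_term d (fun j => PhiN d w lam 0 i j N)); auto.
    intros; apply PhiN_nonneg; auto.
  - intros H i Hi. apply (rsum_bounded_seq d (fun j N => PhiN d w lam 0 i j N)).
    intros; apply H; auto.
Qed.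

Lemma Phi_finite_shiftn d w lam s k i j :
  Phi_finite d (shiftn s w) lam k i j <-> Phi_finite d w lam (k + s) i j.
Proof.
  assert (E : forall N, PhiN d (shiftn s w) lam k i j N = PhiN d w lam (k + s) i j N).
  { intros N. apply rsum_ext; intros n _. rewrite (hit_shift d w (k + s + 1) n s (k + s)).
    replace (k + s + 1 - s)%Z with (k + 1)%Z by ring. replace (k + s - s)%Z with k by ring. auto. }
  unfold Phi_finite, bounded_seq. setoid_rewrite E. tauto.
Qed.

(** At [lambda = 0], the row sums of [Phi_0] are probabilities, hence at most 1. *)
Lemma maxrow_Phi0_finite_at_0 d kappa w : good_env d kappa w -> maxrow_Phi0_finite d w 0.
Proof.
  intros Hg i Hi. exists 1. intros N.
  rewrite (rsum_ext _ _ (fun j => rsum N (fun n => hit d w (0 + 1) n 0 i j))).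
  - rewrite rsum_exch. apply hit_mass_le1; auto.
    + eapply good_env_nonneg; eauto.
    + intros x a Ha. destruct (Hg x) as [[_ Hrow] _]. apply Hrow; auto.
  - intros j _. apply rsum_ext; intros. rewrite Rmult_0_l, exp_0; ring.
Qed.

Lemma Phi_finite_transfer d w lam k k' l m i j c C : nonneg_env d w -> c > 0 ->
  (i < d)%nat -> (j < d)%nat ->
  (forall a, c * hit d w (k + 1) a k l m <= hit d w (k' + 1) (a + C) k' i j) ->
  Phi_finite d w lam k' i j -> Phi_finite d w lam k l m.
Proof.
  intros Hw Hc Hi Hj Hcmp [M HM].
  set (K := exp (lam * INR C) * c).
  assert (HK : K > 0) by (unfold K; apply Rmult_lt_0_compat; [apply exp_pos|lra]).
  exists (M / K). intros N.
  assert (Hscaled : K * PhiN d w lam k l m N <= PhiN d w lam k' i j (C + N)).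
  { unfold PhiN. rewrite rsum_add.
    assert (0 <= rsum C (fun n => exp (lam * INR n) * hit d w (k' + 1) n k' i j)).
    { apply rsum_nonneg; intros. apply Rmult_le_pos; [left; apply exp_pos|apply hit_nonneg; auto]. }
    enough (K * rsum N (fun n => exp (lam * INR n) * hit d w (k + 1) n k l m) <=
            rsum N (fun a => exp (lam * INR (C + a)) * hit d w (k' + 1) (C + a) k' i j)) by lra.
    rewrite rsum_scal_l. apply rsum_le; intros a _.
    rewrite plus_INR, Rmult_plus_distr_l, exp_plus, Nat.add_comm.
    specialize (Hcmp a). unfold K.
    assert (0 < exp (lam * INR C) * exp (lam * INR a))
      by (apply Rmult_lt_0_compat; apply exp_pos).
    assert (exp (lam * INR C) * exp (lam * INR a) * (c * hit d w (k + 1) a k l m)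
            <= exp (lam * INR C) * exp (lam * INR a) * hit d w (k' + 1) (a + C) k' i j)
      by (apply Rmult_le_compat_l; lra).
    lra. }
  specialize (HM (C + N)%nat). apply Rmult_le_reg_l with K; auto.
  replace (K * (M / K)) with M by (field; lra). lra.
Qed.

(** If one entry of [Phi_k(lambda)] is infinite, then every entry of [Phi_{k+1}(lambda)] is:
    the detour of [hit_detour] has positive weight by [sigmaK_excursions_pos]. *)
Lemma Phi_infinite_propagates d kappa w lam k l m : kappa > 0 -> good_env d kappa w ->
  (l < d)%nat -> (m < d)%nat -> ~ Phi_finite d w lam k l m ->
  forall i j, (i < d)%nat -> (j < d)%nat -> ~ Phi_finite d w lam (k + 1) i j.
Proof.
  intros Hk Hg Hl Hm Hinf i j Hi Hj Hfin. apply Hinf.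
  assert (Hw := good_env_nonneg d kappa w Hg).
  set (s := w (k + 1)%Z).
  destruct (sigmaK_excursions_pos d kappa s i l Hk (Hg (k + 1)%Z) Hi Hl) as [[n1 Hc1] _].
  destruct (sigmaK_excursions_pos d kappa s m j Hk (Hg (k + 1)%Z) Hm Hj) as [_ [n2 Hc2]].
  apply (Phi_finite_transfer d w lam k (k + 1) l m i j
           (mmul d (mpow d (tr s) n1) (tq s) i l * mmul d (mpow d (tr s) n2) (tp s) m j)
           (n1 + n2 + 2)); auto.
  - apply Rmult_lt_0_compat; auto.
  - intros a. replace (a + (n1 + n2 + 2))%nat with (n1 + S (a + (n2 + 1)))%nat by lia.
    apply hit_detour; auto.
Qed.

(** * Elementary measure theory for the product sigma-algebra on environments *)

Lemma Zall_iff (P : Z -> Prop) :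
  (forall k, P k) <-> (forall n : nat, P (Z.of_nat n) /\ P (- Z.of_nat n)%Z).
Proof.
  split; [intros H n; split; auto|]. intros H k. destruct (Z_le_gt_dec 0 k).
  - replace k with (Z.of_nat (Z.to_nat k)) by lia. apply H.
  - replace k with (- Z.of_nat (Z.to_nat (- k)))%Z by lia. apply H.
Qed.

Section Measure.
Variable d : nat.
Variable eta : ProbMeasure d.
Notation M := (measurable d).
Notation m := (mu d eta).

Lemma m_ext A B : (forall w, A w <-> B w) -> m A = m B.
Proof.
  intros H. replace B with A; auto.
  apply functional_extensionality; intros w. apply propositional_extensionality; auto.
Qed.

Lemma M_False : M (fun _ => False).
Proof. eapply meas_ext; [apply meas_compl, meas_full|]. intros w; tauto. Qed.

Lemma M_union2 A B : M A -> M B -> M (fun w => A w \/ B w).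
Proof.
  intros HA HB. eapply meas_ext.
  - apply (meas_union d (fun n => match n with O => A | _ => B end)). intros [|n]; auto.
  - intros w; split; [intros [[|n] H]; auto|]. intros [H|H]; [exists O|exists (S O)]; auto.
Qed.

Lemma M_inter2 A B : M A -> M B -> M (fun w => A w /\ B w).
Proof.
  intros HA HB. apply (meas_ext d (fun w => ~ (~ A w \/ ~ B w))).
  - apply meas_compl, M_union2; apply meas_compl; auto.
  - intros w; split; [intros h; split; apply NNPP; tauto|tauto].
Qed.

Lemma M_inter_nat (A : nat -> Env -> Prop) : (forall n, M (A n)) -> M (fun w => forall n, A n w).
Proof.
  intros H. eapply meas_ext; [apply meas_compl, meas_union; intros n; apply meas_compl, H|].
  intros w; split; [|intros H1 [n Hn]; auto].
  intros H1 n. apply NNPP; intro; apply H1; eauto.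
Qed.

Lemma M_inter_Z (A : Z -> Env -> Prop) : (forall k, M (A k)) -> M (fun w => forall k, A k w).
Proof.
  intros H. eapply meas_ext; [apply M_inter_nat; intros n; apply M_inter2; apply H|].
  intros w. symmetry. apply (Zall_iff (fun k => A k w)).
Qed.

Lemma M_imp (P : Prop) A : (P -> M A) -> M (fun w => P -> A w).
Proof.
  intros H. destruct (classic P) as [HP|HP].
  - eapply meas_ext; [apply H, HP|]. intros; tauto.
  - eapply meas_ext; [apply meas_full|]. intros; tauto.
Qed.

Lemma m_False : m (fun _ => False) = 0.
Proof.
  assert (H := mu_sigma_add d eta (fun _ _ => False) (fun _ => M_False) (fun _ _ _ _ H _ => H)).
  cbv beta in H.
  rewrite (m_ext (fun w => exists n : nat, False) (fun _ => False)) in H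
    by (intros; split; [intros [_ []]|tauto]).
  set (x := m (fun _ => False)) in *. assert (0 <= x) by (apply mu_nonneg, M_False).
  destruct (Req_dec x 0); auto. exfalso.
  destruct (H x) as [N HN]; [lra|]. specialize (HN (S N) ltac:(lia)).
  rewrite sum_cte in HN. unfold Rdist in HN. rewrite !S_INR in HN.
  assert (0 <= INR N) by apply pos_INR.
  rewrite Rabs_pos_eq in HN by nra. nra.
Qed.

Lemma m_disj2 A B : M A -> M B -> (forall w, A w -> B w -> False) ->
  m (fun w => A w \/ B w) = m A + m B.
Proof.
  intros HA HB Hd.
  set (Sq := fun n => match n with O => A | S O => B | _ => fun _ : Env => False end).
  assert (HS : forall n, M (Sq n)) by (intros [|[|n]]; simpl; auto; apply M_False).
  assert (Hdis : forall n k w, n <> k -> Sq n w -> Sq k w -> False).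
  { intros [|[|n]] [|[|k]] w Hn H1 H2; simpl in *; try tauto; try lia; eauto. }
  assert (H := mu_sigma_add d eta Sq HS Hdis).
  rewrite (m_ext (fun w => exists n, Sq n w) (fun w => A w \/ B w)) in H.
  2:{ intros w; split; [intros [[|[|n]] Hn]; simpl in *; tauto|].
      intros [H1|H1]; [exists O|exists (1%nat)]; auto. }
  apply (uniqueness_sum _ _ _ H). intros eps Heps. exists 1%nat. intros n Hn.
  assert (E : forall k, sum_f_R0 (fun n => m (Sq n)) (S k) = m A + m B).
  { induction k; simpl; auto. simpl in IHk. rewrite IHk, m_False. lra. }
  destruct n; [lia|]. rewrite E. unfold Rdist.
  replace (m A + m B - (m A + m B)) with 0 by ring. rewrite Rabs_R0; lra.
Qed.

Lemma m_compl A : M A -> m (fun w => ~ A w) = 1 - m A.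
Proof.
  intros HA. assert (H := m_disj2 A (fun w => ~ A w) HA (meas_compl d A HA) (fun w h1 h2 => h2 h1)).
  rewrite (m_ext _ (fun _ => True)), mu_full in H by (intros; split; [auto|intros _; apply classic]).
  lra.
Qed.

Lemma m_split A B : M A -> M B -> (forall w, A w -> B w) ->
  m B = m A + m (fun w => B w /\ ~ A w).
Proof.
  intros HA HB Hs. rewrite <- m_disj2.
  - apply m_ext. intros w; split; [|intros [h|[h _]]; auto].
    intros h. destruct (classic (A w)); auto.
  - auto.
  - apply M_inter2; auto. apply meas_compl; auto.
  - intros w h1 [_ h2]; auto.
Qed.

Lemma m_mono A B : M A -> M B -> (forall w, A w -> B w) -> m A <= m B.
Proof.
  intros HA HB Hs. rewrite (m_split A B HA HB Hs).
  assert (0 <= m (fun w => B w /\ ~ A w)) by (apply mu_nonneg, M_inter2; auto; apply meas_compl; auto).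
  lra.
Qed.

Lemma m_sub2 A B : M A -> M B -> m (fun w => A w \/ B w) <= m A + m B.
Proof.
  intros HA HB.
  rewrite (m_split A (fun w => A w \/ B w) HA (M_union2 A B HA HB)) by auto.
  assert (m (fun w => (A w \/ B w) /\ ~ A w) <= m B); [|lra].
  apply m_mono; auto; [|tauto]. apply M_inter2; [apply M_union2|apply meas_compl]; auto.
Qed.

(** Countable unions of null sets are null (by disjointification). *)
Lemma m_null_union (A : nat -> Env -> Prop) : (forall n, M (A n)) -> (forall n, m (A n) = 0) ->
  m (fun w => exists n, A n w) = 0.
Proof.
  intros HM H0.
  set (D := fun n w => A n w /\ forall k, (k < n)%nat -> ~ A k w).
  assert (HD : forall n, M (D n)).
  { intros n. apply M_inter2; auto. apply M_inter_nat. intros k. apply M_imp; intros _; apply meas_compl; auto. }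
  assert (Hdis : forall n k w, n <> k -> D n w -> D k w -> False).
  { intros n k w Hnk [H1 H2] [H3 H4]. destruct (Nat.lt_gt_cases n k) as [[Hl|Hl] _]; auto.
    - apply (H4 n Hl H1).
    - apply (H2 k Hl H3). }
  assert (HDz : forall n, m (D n) = 0).
  { intros n. assert (0 <= m (D n)) by (apply mu_nonneg; auto).
    assert (m (D n) <= m (A n)) by (apply m_mono; auto; intros w [h _]; auto).
    rewrite H0 in *. lra. }
  assert (H := mu_sigma_add d eta D HD Hdis).
  rewrite (m_ext (fun w => exists n, D n w) (fun w => exists n, A n w)) in H.
  - apply (uniqueness_sum _ _ _ H). intros eps Heps. exists O. intros n _.
    assert (E : forall k, sum_f_R0 (fun n => m (D n)) k = 0).
    { induction k; simpl; rewrite HDz; [lra|]. rewrite IHk; lra. }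
    rewrite E. unfold Rdist. replace (0 - 0) with 0 by ring. rewrite Rabs_R0; lra.
  - intros w; split; [intros [n [h _]]; eauto|].
    intros [n Hn]. induction n as [n IH] using (well_founded_induction lt_wf).
    destruct (classic (exists k, (k < n)%nat /\ A k w)) as [[k [Hk1 Hk2]]|Hno].
    + apply (IH k Hk1 Hk2).
    + exists n. split; auto. intros k Hk Ak. apply Hno; eauto.
Qed.

Lemma m_one_inter_nat (A : nat -> Env -> Prop) : (forall n, M (A n)) -> (forall n, m (A n) = 1) ->
  m (fun w => forall n, A n w) = 1.
Proof.
  intros HM H1.
  assert (Hnull : m (fun w => exists n, ~ A n w) = 0).
  { apply m_null_union; intros n; [apply meas_compl; auto|]. rewrite m_compl, H1 by auto; ring. }
  assert (HU : M (fun w => exists n, ~ A n w)) by (apply meas_union; intros; apply meas_compl; auto).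
  assert (H2 := m_compl _ HU). rewrite Hnull in H2.
  rewrite (m_ext _ (fun w => forall n, A n w)) in H2; [lra|].
  intros w; split; [intros h n; apply NNPP; intro; apply h; eauto|intros h [n hn]; auto].
Qed.

Lemma m_one_inter2 A B : M A -> M B -> m A = 1 -> m B = 1 -> m (fun w => A w /\ B w) = 1.
Proof.
  intros HA HB H1 H2.
  rewrite <- (m_one_inter_nat (fun n => match n with O => A | _ => B end))
    by (intros [|n]; auto).
  apply m_ext. intros w; split; [intros [h1 h2] [|n]; auto|].
  intros h; split; [apply (h O)|apply (h 1%nat)].
Qed.

Lemma m_one_inter_Z (A : Z -> Env -> Prop) : (forall k, M (A k)) -> (forall k, m (A k) = 1) ->
  m (fun w => forall k, A k w) = 1.
Proof.
  intros HM H1.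
  rewrite <- (m_one_inter_nat (fun n w => A (Z.of_nat n) w /\ A (- Z.of_nat n)%Z w))
    by (intros n; (apply M_inter2 || apply m_one_inter2); auto).
  apply m_ext. intros w. apply (Zall_iff (fun k => A k w)).
Qed.

Lemma m_inter_full X A : M X -> M A -> m A = 1 -> m (fun w => X w /\ A w) = m X.
Proof.
  intros HX HA H1.
  assert (HXA : M (fun w => X w /\ A w)) by (apply M_inter2; auto).
  rewrite (m_split (fun w => X w /\ A w) X HXA HX) by tauto.
  assert (m (fun w => X w /\ ~ (X w /\ A w)) <= m (fun w => ~ A w)).
  { apply m_mono; [apply M_inter2, meas_compl|apply meas_compl|]; auto; tauto. }
  assert (0 <= m (fun w => X w /\ ~ (X w /\ A w)))
    by (apply mu_nonneg, M_inter2, meas_compl; auto).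
  rewrite m_compl in * by auto. lra.
Qed.

(** A decreasing sequence of sets of constant measure: the intersection keeps that measure
    (only the inequality needed later is stated). *)
Lemma m_decreasing_const (A : nat -> Env -> Prop) : (forall n, M (A n)) ->
  (forall n w, A (S n) w -> A n w) -> (forall n, m (A n) = m (A O)) ->
  m (A O) <= m (fun w => forall n, A n w).
Proof.
  intros HM Hdec Hconst.
  set (D := fun n w => A n w /\ ~ A (S n) w).
  assert (HD : forall n, M (D n)) by (intros; apply M_inter2; auto; apply meas_compl; auto).
  assert (HDz : forall n, m (D n) = 0).
  { intros n. assert (H := m_split (A (S n)) (A n) (HM _) (HM _) (Hdec n)).
    rewrite (Hconst n), (Hconst (S n)) in H. unfold D. lra. }
  assert (Hcover : forall w, A O w -> (forall n, A n w) \/ exists n, D n w).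
  { intros w H0. destruct (classic (forall n, A n w)) as [Hall|Hn]; [left; auto|right].
    apply not_all_ex_not in Hn. destruct Hn as [N HN].
    induction N as [|N IH]; [contradiction|].
    destruct (classic (A N w)); [exists N; split; auto|apply IH; auto]. }
  assert (HI : M (fun w => forall n, A n w)) by (apply M_inter_nat; auto).
  assert (HU : M (fun w => exists n, D n w)) by (apply meas_union; auto).
  assert (m (A O) <= m (fun w => (forall n, A n w) \/ exists n, D n w))
    by (apply m_mono; auto; apply M_union2; auto).
  assert (H2 := m_sub2 _ _ HI HU). rewrite (m_null_union D HD HDz) in H2. lra.
Qed.

Lemma as_mono (P Q : Env -> Prop) :
  almost_surely d eta P -> (forall w, P w -> Q w) -> almost_surely d eta Q.
Proof. intros [A [HA [Hm HP]]] H. exists A; auto. Qed.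

Lemma as_and (P Q : Env -> Prop) :
  almost_surely d eta P -> almost_surely d eta Q -> almost_surely d eta (fun w => P w /\ Q w).
Proof.
  intros [A [HA [HmA HP]]] [B [HB [HmB HQ]]].
  exists (fun w => A w /\ B w). split; [apply M_inter2; auto|split; [apply m_one_inter2; auto|]].
  intros w [h1 h2]; auto.
Qed.

Lemma not_as_compl_pos (E : Env -> Prop) : M E -> ~ almost_surely d eta E ->
  m (fun w => ~ E w) > 0.
Proof.
  intros HE Hnot. assert (H := mu_nonneg d eta _ (meas_compl d E HE)).
  rewrite m_compl in * by auto.
  destruct (Req_dec (m E) 1) as [E1|]; [|lra].
  exfalso. apply Hnot. exists E. split; [auto|split; auto].
Qed.

End Measure.

(** * Stationarity and ergodicity *)

Lemma Zall_succ (P : Z -> Prop) : (forall k, P (k + 1)%Z) <-> (forall k, P k).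
Proof. split; intros H k; auto. replace k with (k - 1 + 1)%Z by ring. apply H. Qed.

Lemma Z_forward_induction (P : Z -> Prop) :
  (forall n : nat, P (- Z.of_nat n)%Z) -> (forall k, P k -> P (k + 1)%Z) -> forall k, P k.
Proof.
  intros Hneg Hstep k. destruct (Z_le_gt_dec k 0).
  - replace k with (- Z.of_nat (Z.to_nat (- k)))%Z by lia. apply Hneg.
  - replace k with (Z.of_nat (Z.to_nat k)) by lia. induction (Z.to_nat k) as [|n IH].
    + apply (Hneg O).
    + replace (Z.of_nat (S n)) with (Z.of_nat n + 1)%Z by lia. auto.
Qed.

Lemma M_shiftn d k A : measurable d A -> measurable d (fun w => A (shiftn k w)).
Proof.
  intros H. induction H.
  - apply (meas_ext d (fun w => c (w (n + k)%Z) i j <= a)); [apply meas_gen; auto|].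
    intros; unfold shiftn; tauto.
  - apply meas_full.
  - apply meas_compl; auto.
  - apply (meas_union d (fun n w => A n (shiftn k w))); auto.
  - eapply meas_ext; [apply IHmeasurable|]. intros; apply H0.
Qed.

Section Stationary.
Variable d : nat.
Variable eta : ProbMeasure d.
Hypothesis Hst : stationary d eta.

Lemma m_shiftn k A : measurable d A -> mu d eta (fun w => A (shiftn k w)) = mu d eta A.
Proof.
  revert k A. apply (Z_forward_induction (fun k => forall A, measurable d A ->
    mu d eta (fun w => A (shiftn k w)) = mu d eta A)).
  - intros n. induction n as [|n IH]; intros A HA.
    + apply m_ext. intros w. simpl. rewrite shiftn0. tauto.
    + rewrite <- (Hst (fun w => A (shiftn (- Z.of_nat (S n)) w))) by (apply M_shiftn; auto).
      rewrite <- (IH A HA). apply m_ext. intros w. rewrite shiftn_shift.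
      replace (- Z.of_nat (S n) + 1)%Z with (- Z.of_nat n)%Z by lia. tauto.
  - intros k IH A HA.
    rewrite <- (Hst A HA), <- (IH (fun w => A (Defs.shift w))) by exact (M_shiftn d 1 A HA).
    apply m_ext. intros w. rewrite shift_shiftn. tauto.
Qed.

Lemma full_translates A : measurable d A -> mu d eta A = 1 ->
  measurable d (fun w => forall k, A (shiftn k w)) /\
  mu d eta (fun w => forall k, A (shiftn k w)) = 1.
Proof.
  intros HA Hm. split.
  - apply M_inter_Z; intros; apply M_shiftn; auto.
  - apply m_one_inter_Z; intros k; [apply M_shiftn; auto|]. rewrite m_shiftn; auto.
Qed.

Lemma as_all_translates (P : Env -> Prop) :
  almost_surely d eta P -> almost_surely d eta (fun w => forall k, P (shiftn k w)).
Proof.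
  intros [A [HA [Hm HP]]]. destruct (full_translates A HA Hm) as [HMt Hmt].
  exists (fun w => forall k, A (shiftn k w)). repeat split; auto.
Qed.

Hypothesis Herg : ergodic d eta.

(** The events [{B at time -n}] decrease and all have probability [eta(B)], so
    their intersection, which is contained in the shift-invariant event
    [{B at every time}], has positive probability; ergodicity makes that probability 1. *)
Lemma ergodic_propagation (G B : Env -> Prop) :
  almost_surely d eta G -> measurable d B -> mu d eta B > 0 ->
  (forall w, G w -> B w -> B (Defs.shift w)) ->
  almost_surely d eta (fun w => forall k, B (shiftn k w)).
Proof.
  intros [A [HA [HmA HAG]]] HB HBpos Hstep.
  set (Gt := fun w => forall k, A (shiftn k w)).
  destruct (full_translates A HA HmA) as [HMt Hmt]. fold Gt in HMt, Hmt.
  assert (Hfwd : forall w, Gt w -> forall k, B (shiftn k w) -> B (shiftn (k + 1) w)).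
  { intros w Hw k HBk. rewrite <- shift_shiftn. apply Hstep; auto. }
  set (Zs := fun (n : nat) w => B (shiftn (- Z.of_nat n) w) /\ Gt w).
  assert (HMZ : forall n, measurable d (Zs n)) by (intros; apply M_inter2; auto; apply M_shiftn; auto).
  assert (HmZ : forall n, mu d eta (Zs n) = mu d eta B).
  { intros n. unfold Zs. rewrite m_inter_full by (auto; apply M_shiftn; auto).
    apply m_shiftn; auto. }
  assert (Hdec : forall n w, Zs (S n) w -> Zs n w).
  { intros n w [H1 H2]. split; auto.
    replace (- Z.of_nat n)%Z with (- Z.of_nat (S n) + 1)%Z by lia. apply Hfwd; auto. }
  set (C := fun w => Gt w /\ forall k, B (shiftn k w)).
  assert (HMC : measurable d C)
    by (apply M_inter2; auto; apply M_inter_Z; intros; apply M_shiftn; auto).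
  assert (HinvC : forall w, C (Defs.shift w) <-> C w).
  { intros w. unfold C, Gt. setoid_rewrite shiftn_shift.
    rewrite (Zall_succ (fun k => A (shiftn k w))), (Zall_succ (fun k => B (shiftn k w))). tauto. }
  assert (HZC : forall w, (forall n, Zs n w) -> C w).
  { intros w Hall. split; [apply (Hall O)|].
    apply Z_forward_induction; [intros n; apply (Hall n)|]. apply Hfwd, (Hall O). }
  assert (HCpos : mu d eta C > 0).
  { assert (mu d eta (Zs O) <= mu d eta (fun w => forall n, Zs n w))
      by (apply m_decreasing_const; auto; intros; rewrite !HmZ; auto).
    assert (mu d eta (fun w => forall n, Zs n w) <= mu d eta C)
      by (apply m_mono; auto; apply M_inter_nat; auto).
    rewrite HmZ in *. lra. }
  exists C. split; [auto|split; [|intros w [_ H]; auto]].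
  destruct (Herg C HMC HinvC); auto. lra.
Qed.

End Stationary.

(** * Measurability of [Phi] *)

Section MeasurableFunctions.
Variable d : nat.
Notation M := (measurable d).

Definition mfun (f : Env -> R) : Prop := forall a, M (fun w => f w <= a).

Lemma mfun_ext f g : mfun f -> (forall w, f w = g w) -> mfun g.
Proof. intros H E a. apply (meas_ext d (fun w => f w <= a)); [apply H|]. intros w; rewrite E; tauto. Qed.

Lemma inv_small e : e > 0 -> exists n : nat, / (INR n + 1) < e.
Proof.
  intros He. destruct (nat_unbounded (/ e)) as [n Hn]. exists n.
  assert (0 < / e) by (apply Rinv_0_lt_compat; lra).
  replace e with (/ / e) by (field; lra). apply Rinv_lt_contravar; nra.
Qed.

Lemma inv_pos n : 0 < / (INR n + 1).
Proof. apply Rinv_0_lt_compat. assert (0 <= INR n) by apply pos_INR. lra. Qed.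

Lemma mfun_lt f a : mfun f -> M (fun w => f w < a).
Proof.
  intros H. eapply meas_ext; [apply (meas_union d (fun n w => f w <= a - / (INR n + 1))); intros; apply H|].
  intros w; split.
  - intros [n Hn]. assert (H1 := inv_pos n). lra.
  - intros Hl. destruct (inv_small (a - f w)) as [n Hn]; [lra|]. exists n. lra.
Qed.

Lemma mfun_ge f a : mfun f -> M (fun w => a <= f w).
Proof. intros H. eapply meas_ext; [apply meas_compl, (mfun_lt f a H)|]. intros w; split; intros; lra. Qed.

Lemma mfun_const c : mfun (fun _ => c).
Proof.
  intros a. destruct (Rle_dec c a).
  - eapply meas_ext; [apply meas_full|]. intros; tauto.
  - eapply meas_ext; [apply M_False|]. intros; tauto.
Qed.

Lemma mfun_coord (c : Trip -> Mat) x i j : (c = tq \/ c = tr \/ c = tp) ->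
  (i < d)%nat -> (j < d)%nat -> mfun (fun w => c (w x) i j).
Proof. intros Hc Hi Hj a. apply meas_gen; auto. Qed.

Definition qq (mm nn : nat) (s : bool) : R := (if s then INR nn else - INR nn) / (INR mm + 1).

Lemma qq_dense x y : x < y -> exists mm nn s, x < qq mm nn s < y.
Proof.
  intros Hxy. destruct (inv_small (y - x)) as [mm Hmm]; [lra|].
  set (D := INR mm + 1). assert (HD : 0 < D) by (unfold D; assert (H := pos_INR mm); lra).
  destruct (archimed (x * D)) as [A1 A2]. set (z := up (x * D)) in *.
  assert (Hq : x < IZR z / D < y).
  { split.
    - apply Rmult_lt_reg_r with D; auto. unfold Rdiv. rewrite Rmult_assoc, Rinv_l by lra. lra.
    - assert (IZR z / D <= x + / D); [|unfold D in *; lra].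
      apply Rmult_le_reg_r with D; auto. unfold Rdiv.
      rewrite Rmult_assoc, Rinv_l, Rmult_plus_distr_r, Rinv_l by lra. lra. }
  destruct (Z_le_gt_dec 0 z).
  - exists mm, (Z.to_nat z), true. unfold qq. rewrite INR_IZR_INZ, Z2Nat.id by lia. auto.
  - exists mm, (Z.to_nat (- z)), false. unfold qq.
    rewrite INR_IZR_INZ, Z2Nat.id, opp_IZR, Ropp_involutive by lia. auto.
Qed.

(** [{f + g < b}] is the countable union over [q] of [{f < q} /\ {g < b - q}]. *)
Lemma mfun_plus f g : mfun f -> mfun g -> mfun (fun w => f w + g w).
Proof.
  intros Hf Hg.
  assert (Hlt : forall b, M (fun w => f w + g w < b)).
  { intros b. eapply meas_ext.
    - apply (meas_union d (fun mm w => exists nn s, f w < qq mm nn s /\ g w < b - qq mm nn s)).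
      intros mm. apply meas_union. intros nn. eapply meas_ext.
      + apply (M_union2 d (fun w => f w < qq mm nn true /\ g w < b - qq mm nn true)
                 (fun w => f w < qq mm nn false /\ g w < b - qq mm nn false));
          apply M_inter2; apply mfun_lt; auto.
      + intros w; split; [intros [h|h]; eauto|intros [[|] h]; auto].
    - intros w; split; [intros [mm [nn [s [h1 h2]]]]; lra|].
      intros h. destruct (qq_dense (f w) (b - g w)) as [mm [nn [s Hs]]]; [lra|].
      exists mm, nn, s. lra. }
  intros a. eapply meas_ext; [apply (M_inter_nat d (fun n w => f w + g w < a + / (INR n + 1))); auto|].
  intros w; split.
  - intros h. apply Rnot_lt_le; intros hc.
    destruct (inv_small (f w + g w - a)) as [n Hn]; [lra|]. specialize (h n). lra.
  - intros h n. assert (H1 := inv_pos n). lra.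
Qed.

Lemma mfun_opp f : mfun f -> mfun (fun w => - f w).
Proof. intros H a. eapply meas_ext; [apply (mfun_ge f (- a) H)|]. intros w; split; intros; lra. Qed.

Lemma mfun_scal_pos c f : c > 0 -> mfun f -> mfun (fun w => c * f w).
Proof.
  intros Hc H a. eapply meas_ext; [apply (H (a / c))|]. intros w. split; intros h.
  - apply (Rmult_le_compat_l c) in h; [|lra]. replace (c * (a / c)) with a in h by (field; lra). lra.
  - apply Rmult_le_reg_l with c; [lra|]. replace (c * (a / c)) with a by (field; lra). auto.
Qed.

Lemma mfun_sq f : mfun f -> mfun (fun w => f w * f w).
Proof.
  intros H a. destruct (Rlt_dec a 0).
  - eapply meas_ext; [apply M_False|]. intros w; split; [tauto|]. intros h. nra.
  - eapply meas_ext; [apply (M_inter2 d _ _ (H (sqrt a)) (mfun_ge f (- sqrt a) H))|].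
    assert (Hs := sqrt_sqrt a ltac:(lra)). assert (Hs0 := sqrt_pos a).
    intros w; split; [intros [h1 h2]; nra|intros h; split; nra].
Qed.

(** Products, by polarization: [f g = ((f + g)^2 - (f - g)^2) / 4]. *)
Lemma mfun_mult f g : mfun f -> mfun g -> mfun (fun w => f w * g w).
Proof.
  intros Hf Hg.
  assert (H1 : mfun (fun w => f w + g w)) by (apply mfun_plus; auto).
  assert (H2 : mfun (fun w => f w + - g w)) by (apply mfun_plus; auto; apply mfun_opp; auto).
  apply mfun_ext with (fun w => / 4 * ((f w + g w) * (f w + g w) + - ((f w + - g w) * (f w + - g w)))).
  - apply mfun_scal_pos; [lra|]. apply mfun_plus; [|apply mfun_opp]; apply mfun_sq; auto.
  - intros w; field.
Qed.

Lemma mfun_rsum n (f : nat -> Env -> R) :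
  (forall l, (l < n)%nat -> mfun (f l)) -> mfun (fun w => rsum n (fun l => f l w)).
Proof.
  induction n; intros H; simpl; [apply mfun_const|].
  apply mfun_plus; [apply IHn; intros; apply H|apply H]; lia.
Qed.

Lemma mfun_mmul_coord (c : Trip -> Mat) (x : Z) (B : Env -> Mat) i j :
  (c = tq \/ c = tr \/ c = tp) -> (i < d)%nat ->
  (forall l, (l < d)%nat -> mfun (fun w => B w l j)) -> mfun (fun w => mmul d (c (w x)) (B w) i j).
Proof.
  intros Hc Hi HB. apply (mfun_rsum d (fun l w => c (w x) i l * B w l j)).
  intros l Hl. apply mfun_mult; auto. apply mfun_coord; auto.
Qed.

(** Hitting probabilities are polynomials in finitely many coordinates. *)
Lemma mfun_hit t j : (j < d)%nat -> forall n x i, (i < d)%nat -> mfun (fun w => hit d w t n x i j).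
Proof.
  intros Hj n. induction n as [|n IH]; intros x i Hi; [simpl; apply mfun_const|].
  destruct (Z.eq_dec x t) as [->|Hx].
  - apply mfun_ext with (fun _ => 0); [apply mfun_const|]. intros w; symmetry; apply hit_S_target.
  - eapply mfun_ext; [|intros w; symmetry; apply hit_S; auto].
    repeat apply mfun_plus; apply mfun_mmul_coord; auto.
Qed.

(** The event [{max_i sum_j Phi_0(lambda)(i,j) < oo}] is measurable: a countable
    combination of sublevel sets of the partial sums. *)
Lemma M_maxrow lam : M (fun w => maxrow_Phi0_finite d w lam).
Proof.
  apply (meas_ext d (fun w => forall i, (i < d)%nat ->
      exists Mn : nat, forall N, rsum d (fun j => PhiN d w lam 0 i j N) <= INR Mn)).
  - apply M_inter_nat. intros i. apply M_imp; intros Hi. apply meas_union; intros Mn. apply M_inter_nat; intros N.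
    apply (mfun_rsum d (fun j w => PhiN d w lam 0 i j N)). intros j Hj.
    apply (mfun_rsum N (fun n w => exp (lam * INR n) * hit d w (0 + 1) n 0 i j)).
    intros; apply mfun_mult; [apply mfun_const|apply mfun_hit]; auto.
  - intros w. unfold maxrow_Phi0_finite, bounded_seq. split; intros h i Hi.
    + destruct (h i Hi) as [Mn HM]. exists (INR Mn); auto.
    + destruct (h i Hi) as [Mr HM]. destruct (nat_unbounded Mr) as [Mn Hn].
      exists Mn. intros N; specialize (HM N); lra.
Qed.

End MeasurableFunctions.

(** * The critical exponent *)

Lemma ER_antisym (x : R) (s : ER) : ER_le (Fin x) s -> ER_le s (Fin x) -> s = Fin x.
Proof. destruct s; simpl; intros; try tauto. f_equal; lra. Qed.

Lemma ER_sup_below (S : R -> Prop) s x : is_ER_sup S s -> ER_lt (Fin x) s ->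
  exists y, S y /\ x < y.
Proof.
  intros [_ Hleast] [Hle Hne]. apply NNPP; intros Hnone. apply Hne. symmetry.
  apply ER_antisym; auto. apply Hleast. intros y Hy. simpl.
  apply Rnot_lt_le. intros Hlt. apply Hnone; eauto.
Qed.

Lemma ER_sup_above (S : R -> Prop) s x : is_ER_sup S s -> ER_lt s (Fin x) -> ~ S x.
Proof.
  intros [Hub _] [Hle Hne] Hx. apply Hne. apply ER_antisym; auto.
Qed.

Lemma maxrow_infinite_propagates d kappa w lam : kappa > 0 ->
  good_env d kappa w -> ~ maxrow_Phi0_finite d w lam ->
  forall i j, (i < d)%nat -> (j < d)%nat -> ~ Phi_finite d w lam 1 i j.
Proof.
  intros Hk Hg Hinf.
  assert (Hw := good_env_nonneg d kappa w Hg).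
  assert (Hentry : exists l m, (l < d)%nat /\ (m < d)%nat /\ ~ Phi_finite d w lam 0 l m).
  { apply NNPP; intros Hnone. apply Hinf, maxrow_entry; auto.
    intros l m Hl Hm. apply NNPP; intros Hlm. apply Hnone; eauto 6. }
  destruct Hentry as [l [m [Hl [Hm Hlm]]]].
  exact (Phi_infinite_propagates d kappa w lam 0 l m Hk Hg Hl Hm Hlm).
Qed.

Lemma maxrow_infinite_shift d kappa w lam : (0 < d)%nat -> kappa > 0 ->
  good_env d kappa w -> ~ maxrow_Phi0_finite d w lam ->
  ~ maxrow_Phi0_finite d (Defs.shift w) lam.
Proof.
  intros Hd Hk Hg Hinf Hfin.
  apply (maxrow_infinite_propagates d kappa w lam Hk Hg Hinf 0 0 Hd Hd).
  rewrite <- (shiftn0 w), shift_shiftn in Hfin.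
  assert (Hw1 : nonneg_env d (shiftn (0 + 1) w))
    by (apply good_env_nonneg with kappa; apply good_env_shiftn; auto).
  apply (Phi_finite_shiftn d w lam (0 + 1) 0 0 0).
  apply (proj1 (maxrow_entry d _ lam Hw1) Hfin); auto.
Qed.

Section CriticalExponent.
Variable d : nat.
Variable eta : ProbMeasure d.
Variable kappa : R.
Hypothesis Hk : kappa > 0.
Hypothesis Hgood : almost_surely d eta (good_env d kappa).
Variable lc : ER.
Hypothesis Hlc : is_lambda_crit d eta lc.

Lemma lambda_crit_nonneg : ER_le (Fin 0) lc.
Proof.
  destruct Hlc as [Hub _]. apply Hub.
  apply (as_mono d eta _ _ Hgood). intros w Hw. apply (maxrow_Phi0_finite_at_0 d kappa w Hw).
Qed.

Hypothesis Hst : stationary d eta.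

(** Below [lambda_crit]: pick [lambda' > lambda] with [Phi_0(lambda')] a.s. finite; by
    stationarity all its translates [Phi_k(lambda')] are a.s. finite, and [Phi] is monotone. *)
Lemma subcritical_finite lam : ER_lt (Fin lam) lc ->
  almost_surely d eta (fun w => forall (k : Z) (i j : nat),
    (i < d)%nat -> (j < d)%nat -> Phi_finite d w lam k i j).
Proof.
  intros Hlam. destruct (ER_sup_below _ _ _ Hlc Hlam) as [lam' [Has Hlt]].
  apply (as_mono d eta _ _ (as_and d eta _ _ Hgood (as_all_translates d eta Hst _ Has))).
  intros w [Hw Hrows] k i j Hi Hj.
  assert (Hwk : good_env d kappa (shiftn k w)) by (apply good_env_shiftn; auto).
  rewrite <- (Z.add_0_l k). apply Phi_finite_shiftn.
  apply Phi_finite_mono with lam'; try lra; auto.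
  - apply good_env_nonneg with kappa; auto.
  - apply maxrow_entry; auto. apply good_env_nonneg with kappa; auto.
Qed.

Hypothesis Herg : ergodic d eta.

(** Above [lambda_crit]: infinite row sums of [Phi_0] have positive probability and
    propagate forward in space, hence (ergodicity) occur at every site a.s.; then every
    entry of every [Phi_k] is infinite. *)
Lemma supercritical_infinite lam : (0 < d)%nat -> ER_lt lc (Fin lam) ->
  almost_surely d eta (fun w => forall (k : Z) (i j : nat),
    (i < d)%nat -> (j < d)%nat -> ~ Phi_finite d w lam k i j).
Proof.
  intros Hd Hlam.
  set (E := fun w => maxrow_Phi0_finite d w lam).
  assert (HE : measurable d (fun w => ~ E w)) by (apply meas_compl, M_maxrow).
  assert (Hpos : mu d eta (fun w => ~ E w) > 0).
  { apply not_as_compl_pos; [apply M_maxrow|]. apply (ER_sup_above _ _ _ Hlc Hlam). }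
  assert (Hall := ergodic_propagation d eta Hst Herg _ _ Hgood HE Hpos
    (fun w Hw HnE => maxrow_infinite_shift d kappa w lam Hd Hk Hw HnE)).
  apply (as_mono d eta _ _ (as_and d eta _ _ Hgood Hall)).
  intros w [Hw HnE] k i j Hi Hj.
  replace k with (1 + (k - 1))%Z by ring. rewrite <- Phi_finite_shiftn.
  apply maxrow_infinite_propagates with kappa; auto.
  - apply good_env_shiftn; auto.
  - apply (HnE (k - 1)%Z).
Qed.

End CriticalExponent.

Theorem mainTheorem5 (d : nat) (Hd : (1 <= d)%nat) (eta : ProbMeasure d)
  (A1 : stationary d eta /\ ergodic d eta)
  (A2 : exists kappa, kappa > 0 /\
          almost_surely d eta (fun w => forall n : Z, inSigmaK d kappa (w n)))
  (lc : ER) (Hlc : is_lambda_crit d eta lc) :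
  ER_le (Fin 0) lc /\
  (forall lam : R, ER_lt (Fin lam) lc ->
     almost_surely d eta (fun w => forall (k : Z) (i j : nat),
        (i < d)%nat -> (j < d)%nat -> Phi_finite d w lam k i j)) /\
  (forall lam : R, ER_lt lc (Fin lam) ->
     almost_surely d eta (fun w => forall (k : Z) (i j : nat),
        (i < d)%nat -> (j < d)%nat -> ~ Phi_finite d w lam k i j)).
Proof.
  destruct A1 as [Hst Herg]. destruct A2 as [kappa [Hk Hgood]].
  split; [|split].
  - exact (lambda_crit_nonneg d eta kappa Hgood lc Hlc).
  - exact (subcritical_finite d eta kappa Hgood lc Hlc Hst).
  - intros lam Hlam.
    exact (supercritical_infinite d eta kappa Hk Hgood lc Hlc Hst Herg lam Hd Hlam).
Qed.
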